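(* Let $M\in\{-1,+1\}^{m\times N}$ and let $M'$ be obtained from $M$ by duplicating rows (each row of $M$ replaced by one or more identical copies), and partition the rows of $M'$ into duplicate classes, one class for each row of $M$. Suppose the initial distribution $D'_1$ for AdaBoost on $M'$ is constant on each duplicate class. Then: (1) the exhaustive AdaBoost orbit $(D'_t)$ on $M'$ remains constant on each duplicate class for all $t$; (2) the class-summed distributions $\bar D_t$ (summing $D'_t$ over each class) evolve exactly as exhaustive AdaBoost on $M$ started from $\bar D_1$; (3) $\gamma(M')=\gamma(M)$.
   Context: Exhaustive AdaBoost on $M\in\{-1,+1\}^{m\times N}$ with smallest-index tie-breaking: from $D_t\in\Delta^{m-1}$, set $\mu_t(j)=(D_t^\top M)_j$, $j_t=\min\operatorname{argmax}_j\mu_t(j)$, $r_t=\mu_t(j_t)$, and $D_{t+1}(i)=D_t(i)/(1+r_tM_{ij_t})$. The weak-learning margin is $\gamma(M)=\min_{D\in\Delta^{m-1}}\max_{1\le j\le N}(D^\top M)_j$. *)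

From HB Require Import structures.
From mathcomp Require Import all_boot all_order all_algebra.
From mathcomp Require Import all_classical all_reals.
Set Implicit Arguments. Unset Strict Implicit. Unset Printing Implicit Defensive.
Import Order.TTheory GRing.Theory Num.Theory.
Local Open Scope ring_scope.

Section AdaBoost.
Variables (R : realType) (m N : nat).
Implicit Types (M : 'M[R]_(m, N.+1)) (D : 'I_m -> R).

Definition pm1 M := forall i j, M i j = 1 \/ M i j = -1.

Definition in_simplex D := (forall i, 0 <= D i) /\ \sum_i D i = 1.

Definition edge M D (j : 'I_N.+1) : R := \sum_i D i * M i j.

Definition edge_max M D : R := \big[Num.max/edge M D ord0]_j edge M D j.

Definition jstar M D : 'I_N.+1 :=
  [arg min_(j < ord0 | edge M D j == edge_max M D) (j : nat)]%O.

Definition ada_step M D : 'I_m -> R :=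
  let j := jstar M D in
  let r := edge M D j in
  fun i => D i / (1 + r * M i j).

(* ada_orbit M D1 t = D_{t+1}  (so ada_orbit M D1 0 = D_1) *)
Definition ada_orbit M D (t : nat) : 'I_m -> R := iter t (ada_step M) D.

(* weak-learning margin gamma(M) = min_{D in simplex} max_j (D^T M)_j
   (the minimum is attained, so it equals the infimum) *)
Definition gamma M : R :=
  inf [set r : R | exists D, in_simplex D /\ r = edge_max M D].

End AdaBoost.

Definition class_sum (R : realType) (m m' : nat) (c : 'I_m' -> 'I_m)
  (D' : 'I_m' -> R) : 'I_m -> R :=
  fun i => \sum_(i' | c i' == i) D' i'.

(* Every quantity AdaBoost looks at on M' -- the edges, hence the chosen column and the
   step size -- depends on D' only through its class sums, because duplicated rows have
   equal entries. The update multiplies D'(i') by a factor depending only on the class of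
   i', so class-constancy is preserved and summing the update over a class gives the
   update on M. For the margin, class summation maps the simplex of M' onto that of M
   (onto, by putting all the mass of a class on one chosen representative), and the
   objective is preserved, so both minimisations range over the same set of values. *)

From HB Require Import structures.
From mathcomp Require Import all_boot all_order all_algebra.
From mathcomp Require Import all_classical all_reals.
Import Order.TTheory GRing.Theory Num.Theory.
Local Open Scope ring_scope.

Section RowDuplication.
Variables (R : realType) (m m' N : nat).
Variables (M : 'M[R]_(m, N.+1)) (M' : 'M[R]_(m', N.+1)) (c : 'I_m' -> 'I_m).

Definition class_const (D' : 'I_m' -> R) :=
  forall i1 i2, c i1 = c i2 -> D' i1 = D' i2.

Lemma sum_class_sum (D' : 'I_m' -> R) : \sum_i class_sum c D' i = \sum_i' D' i'.
Proof. by rewrite [RHS](partition_big c xpredT). Qed.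

Lemma in_simplex_class_sum (D' : 'I_m' -> R) :
  in_simplex D' -> in_simplex (class_sum c D').
Proof.
move=> [D'_ge0 D'_sum1]; split; last by rewrite sum_class_sum.
by move=> i; apply: sumr_ge0 => i' _.
Qed.

Hypothesis M'_dup : forall i' j, M' i' j = M (c i') j.

Lemma edge_dup (D' : 'I_m' -> R) : edge M' D' = edge M (class_sum c D').
Proof.
apply: funext => j; rewrite /edge (partition_big c xpredT) //=.
apply: eq_bigr => i _; rewrite /class_sum big_distrl /=.
by apply: eq_bigr => i' /eqP <-; rewrite M'_dup.
Qed.

Lemma edge_max_dup (D' : 'I_m' -> R) :
  edge_max M' D' = edge_max M (class_sum c D').
Proof. by rewrite /edge_max edge_dup. Qed.

Lemma jstar_dup (D' : 'I_m' -> R) : jstar M' D' = jstar M (class_sum c D').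
Proof. by rewrite /jstar /edge_max edge_dup. Qed.

Lemma ada_step_dup (D' : 'I_m' -> R) i' :
  let j := jstar M (class_sum c D') in
  ada_step M' D' i' = D' i' / (1 + edge M (class_sum c D') j * M (c i') j).
Proof. by rewrite /ada_step jstar_dup edge_dup M'_dup. Qed.

Lemma class_const_ada_orbit (D' : 'I_m' -> R) t :
  class_const D' -> class_const (ada_orbit M' D' t).
Proof.
move=> D'_const; elim: t => [|t IH] //= i1 i2 c12.
by rewrite !ada_step_dup (IH _ _ c12) c12.
Qed.

Lemma class_sum_ada_step (D' : 'I_m' -> R) :
  class_sum c (ada_step M' D') = ada_step M (class_sum c D').
Proof.
apply: funext => i; rewrite {1}/class_sum.
under eq_bigr => i' _ do rewrite ada_step_dup.
rewrite /ada_step /class_sum big_distrl /=.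
by apply: eq_bigr => i' /eqP ->.
Qed.

Lemma class_sum_ada_orbit (D' : 'I_m' -> R) t :
  class_sum c (ada_orbit M' D' t) = ada_orbit M (class_sum c D') t.
Proof. by elim: t => [|t IH] //=; rewrite class_sum_ada_step IH. Qed.

Variable s : 'I_m -> 'I_m'.
Hypothesis sK : cancel s c.

Definition class_lift (D : 'I_m -> R) (i' : 'I_m') : R :=
  if i' == s (c i') then D (c i') else 0.

Lemma class_sum_lift (D : 'I_m -> R) : class_sum c (class_lift D) = D.
Proof.
apply: funext => i; rewrite /class_sum (bigD1 (s i)) /=; last by rewrite sK.
rewrite /class_lift sK eqxx big1 ?addr0 // => i' /andP[/eqP c_i' /negbTE].
by rewrite c_i' => ->.
Qed.

Lemma in_simplex_lift (D : 'I_m -> R) :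
  in_simplex D -> in_simplex (class_lift D).
Proof.
move=> [D_ge0 D_sum1]; split; last by rewrite -sum_class_sum class_sum_lift.
by move=> i'; rewrite /class_lift; case: ifP.
Qed.

Lemma gamma_dup : gamma M' = gamma M.
Proof.
rewrite /gamma; congr inf; apply/seteqP; split=> _ /= [D [D_simplex ->]].
- exists (class_sum c D); split; first exact: in_simplex_class_sum.
  by rewrite edge_max_dup.
- exists (class_lift D); split; first exact: in_simplex_lift.
  by rewrite edge_max_dup class_sum_lift.
Qed.

End RowDuplication.

Theorem lemma7 (R : realType) (m m' N : nat)
    (M : 'M[R]_(m, N.+1)) (M' : 'M[R]_(m', N.+1))
    (c : 'I_m' -> 'I_m) (D1' : 'I_m' -> R) :
  pm1 M ->
  (forall i, exists i', c i' = i) ->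
  (forall i' j, M' i' j = M (c i') j) ->
  in_simplex D1' ->
  (forall i1 i2, c i1 = c i2 -> D1' i1 = D1' i2) ->
  [/\ (forall t i1 i2, c i1 = c i2 ->
          ada_orbit M' D1' t i1 = ada_orbit M' D1' t i2),
      (forall t, class_sum c (ada_orbit M' D1' t) =
                 ada_orbit M (class_sum c D1') t)
    & gamma M' = gamma M].
Proof.
(* Neither the +-1 entries nor D1' being a distribution is needed. *)
move=> _ c_surj M'_dup _ D1'_const.
have [s sK] := fin_all_exists c_surj.
split.
- by move=> t; exact: class_const_ada_orbit.
- by move=> t; exact: class_sum_ada_orbit.
- exact: gamma_dup sK.
Qed.
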